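(* Let $\mathbf{A}$ be a three-element Mal'cev algebra whose monolith $\mu$ is Abelian. Then $(0_A:\mu)=\mu$.
   Context: A Mal'cev algebra has a term $d$ with $d(y,x,x)\approx d(x,x,y)\approx y$. The monolith of $\mathbf{A}$ is the least congruence strictly above the equality relation $0_A$ (it is $1_A=A^2$ if $\mathbf{A}$ is simple). For congruences $\alpha,\beta$, $\alpha$ centralizes $\beta$ if the relation $\{(x,y,z,d(x,y,z)): x\,\alpha\,y\,\beta\,z\}$ is preserved by all operations of $\mathbf{A}$; $\alpha$ is Abelian if $\alpha$ centralizes $\alpha$; the centralizer $(0_A:\alpha)$ is the largest congruence $\delta$ such that $\alpha$ centralizes $\delta$. *)

From mathcomp Require Import all_boot.
Set Implicit Arguments. Unset Strict Implicit. Unset Printing Implicit Defensive.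

Section UA.
Variables (T : finType) (I : Type) (ar : I -> nat)
          (op : forall i : I, ('I_(ar i) -> T) -> T).

Inductive term (n : nat) : Type :=
| Var : 'I_n -> term n
| App : forall i : I, ('I_(ar i) -> term n) -> term n.

Fixpoint eval (n : nat) (v : 'I_n -> T) (t : term n) : T :=
  match t with
  | Var j => v j
  | App i args => op (fun k => eval v (args k))
  end.

Definition tup3 (x y z : T) : 'I_3 -> T :=
  fun k => match val k with 0 => x | 1 => y | _ => z end.

Definition top3 (t : term 3) (x y z : T) : T := eval (tup3 x y z) t.

Definition malcev_term (t : term 3) : Prop :=
  forall x y : T, top3 t y x x = y /\ top3 t x x y = y.

Definition congruence (a : rel T) : Prop :=
  [/\ forall x, a x x,
      forall x y, a x y -> a y x,
      forall x y z, a x y -> a y z -> a x z &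
      forall i (u v : 'I_(ar i) -> T), (forall k, a (u k) (v k)) ->
        a (op u) (op v)].

Definition subrel (a b : rel T) : Prop := forall x y, a x y -> b x y.

Definition is_monolith (mu : rel T) : Prop :=
  [/\ congruence mu,
      exists x y, mu x y /\ x <> y &
      forall b, congruence b -> (exists x y, b x y /\ x <> y) -> subrel mu b].

Definition Mrel (d : term 3) (a b : rel T) (x y z w : T) : Prop :=
  a x y /\ b y z /\ w = top3 d x y z.

Definition centralizes (d : term 3) (a b : rel T) : Prop :=
  forall i (x y z w : 'I_(ar i) -> T),
    (forall k, Mrel d a b (x k) (y k) (z k) (w k)) ->
    Mrel d a b (op x) (op y) (op z) (op w).

Definition abelian (d : term 3) (a : rel T) : Prop := centralizes d a a.

Definition is_centralizer (d : term 3) (a delta : rel T) : Prop :=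
  [/\ congruence delta, centralizes d a delta &
      forall b, congruence b -> centralizes d a b -> subrel b delta].

End UA.

(** If mu centralizes a congruence b and x b y, the translation
    z |-> d(z, x, y) maps the mu-class of x into that of y, and
    z |-> d(z, y, x) undoes it; both facts are instances of the term condition
    applied to d itself.  Hence b-related elements have mu-classes of equal
    size.  On three elements a nontrivial equivalence that is not total has one
    class of size two and one of size one, so b cannot relate elements lying in
    different mu-classes. *)
From mathcomp Require Import all_boot zify.

Set Implicit Arguments.
Unset Strict Implicit.
Unset Printing Implicit Defensive.

Definition rclass (T : finType) (a : rel T) (x : T) : {set T} := [set z | a z x].

Section TermCondition.

Variables (T : finType) (I : Type) (ar : I -> nat)
          (op : forall i : I, ('I_(ar i) -> T) -> T) (d : term ar 3).

Lemma centralizes_eval (a b : rel T) n (t : term ar n) (xs ys zs ws : 'I_n -> T) :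
  centralizes op d a b ->
  (forall k, Mrel op d a b (xs k) (ys k) (zs k) (ws k)) ->
  Mrel op d a b (eval op xs t) (eval op ys t) (eval op zs t) (eval op ws t).
Proof.
by move=> Cab Hk; elim: t => [j|i args IH] /=; [apply: Hk | apply: Cab].
Qed.

Lemma centralizes_top3 (a b : rel T) (t : term ar 3)
    x1 y1 z1 w1 x2 y2 z2 w2 x3 y3 z3 w3 :
  centralizes op d a b ->
  Mrel op d a b x1 y1 z1 w1 -> Mrel op d a b x2 y2 z2 w2 ->
  Mrel op d a b x3 y3 z3 w3 ->
  Mrel op d a b (top3 op t x1 x2 x3) (top3 op t y1 y2 y3)
    (top3 op t z1 z2 z3) (top3 op t w1 w2 w3).
Proof.
move=> Cab M1 M2 M3; apply: centralizes_eval => //.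
by case=> [[|[|[|k]]] Hk].
Qed.

Hypothesis d_malcev : malcev_term op d.

Lemma malcevL x y : top3 op d y x x = y.
Proof. by case: (d_malcev x y). Qed.

Lemma malcevR x y : top3 op d x x y = y.
Proof. by case: (d_malcev x y). Qed.

Variables (a b : rel T).
Hypotheses (a_refl : reflexive a) (b_refl : reflexive b)
           (Cab : centralizes op d a b).

Lemma Mrel_diag x : Mrel op d a b x x x x.
Proof. by split; [|split; rewrite ?malcevR]. Qed.

Lemma Mrel_left z x : a z x -> Mrel op d a b z x x z.
Proof. by split; [|split; rewrite ?malcevL]. Qed.

Lemma Mrel_right x y : b x y -> Mrel op d a b x x y y.
Proof. by split; [|split; rewrite ?malcevR]. Qed.

Lemma translate_rclass z x y : a z x -> b x y -> a (top3 op d z x y) y.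
Proof.
move=> azx bxy.
have [] := centralizes_top3 d Cab (Mrel_left azx) (Mrel_diag x) (Mrel_diag y).
by rewrite malcevR.
Qed.

Lemma translateK z x y : a z x -> b x y -> top3 op d (top3 op d z x y) y x = z.
Proof.
move=> azx bxy; set w := top3 op d z x y.
have Mzxyw : Mrel op d a b z x y w by [].
have [_ [_]] := centralizes_top3 d Cab Mzxyw (Mrel_right bxy) (Mrel_diag x).
by move=> ->; rewrite !malcevR !malcevL.
Qed.

Lemma card_rclass_le x y : b x y -> #|rclass a x| <= #|rclass a y|.
Proof.
move=> bxy; pose f z := top3 op d z x y.
have f_inj : {in rclass a x &, injective f}.
  move=> z1 z2; rewrite !inE => az1 az2 Ef.
  by rewrite -(translateK az1 bxy) -(translateK az2 bxy) -/(f z1) Ef.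
rewrite -(card_in_imset f_inj); apply/subset_leq_card/subsetP => w /imsetP[z].
by rewrite !inE => azx ->; apply: translate_rclass.
Qed.

End TermCondition.

Lemma cardsU_disjoint (T : finType) (A B : {set T}) :
  [disjoint A & B] -> #|A :|: B| = #|A| + #|B|.
Proof. by move=> AB; apply/eqP; rewrite (leq_card_setU A B).2. Qed.

Section ThreeElementEquivalence.

Variables (T : finType) (e : rel T).
Hypotheses (e_refl : reflexive e) (e_sym : forall x y, e x y -> e y x)
           (e_trans : forall x y z, e x y -> e y z -> e x z).

Lemma rclass_id x : x \in rclass e x.
Proof. by rewrite inE. Qed.

Lemma rclass_eq x y : e x y -> rclass e x = rclass e y.
Proof.
move=> exy; apply/setP => z; rewrite !inE.
by apply/idP/idP => [/e_trans|ezy]; [apply | apply: e_trans ezy (e_sym exy)].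
Qed.

Lemma rclass_disjoint x y : ~~ e x y -> [disjoint rclass e x & rclass e y].
Proof.
move=> nexy; rewrite -setI_eq0; apply/eqP/setP => z; rewrite !inE.
by apply/negbTE; apply: contra nexy => /andP[/e_sym ezx]; apply: e_trans.
Qed.

Lemma card_rclass_gt0 x : 0 < #|rclass e x|.
Proof. by apply/card_gt0P; exists x; apply: rclass_id. Qed.

Lemma card3_rclass_neq p q x y :
  #|T| = 3 -> e p q -> p != q -> ~~ e x y -> #|rclass e x| != #|rclass e y|.
Proof.
move=> T3 epq npq nexy; apply/eqP => Exy.
have card_p : 2 <= #|rclass e p|.
  have <- : #|[set p; q]| = 2 by rewrite cards2 npq.
  apply/subset_leq_card/subsetP => z.
  by rewrite !inE => /orP[] /eqP ->; [apply: e_refl | apply: e_sym].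
have card_xy : #|rclass e x| + #|rclass e y| <= 3.
  by rewrite -cardsU_disjoint ?rclass_disjoint // -T3 max_card.
have not_e_p z : #|rclass e z| = #|rclass e x| -> ~~ e p z.
  move=> Ez; apply: contraL card_xy => /rclass_eq Epz.
  by move: card_p; rewrite Epz Ez -Exy; lia.
have dis_p : [disjoint rclass e p & rclass e x :|: rclass e y].
  by rewrite -setI_eq0 setIUr !disjoint_setI0 ?setU0 ?rclass_disjoint ?not_e_p.
have := max_card (rclass e p :|: (rclass e x :|: rclass e y)).
rewrite !cardsU_disjoint ?rclass_disjoint // T3.
have := card_rclass_gt0 x; lia.
Qed.

End ThreeElementEquivalence.

Theorem lemma4p2 (T : finType) (I : Type) (ar : I -> nat)
    (op : forall i : I, ('I_(ar i) -> T) -> T)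
    (d : term ar 3) (mu : rel T) :
  #|T| = 3 ->
  malcev_term op d ->
  is_monolith op mu ->
  abelian op d mu ->
  is_centralizer op d mu mu.
Proof.
move=> T3 d_malcev [mu_cong [p [q [mupq npq]]] _] mu_abelian.
split=> // b [b_refl b_sym _ _] Cb x y bxy; apply: contraT => nmuxy.
have [mu_refl mu_sym mu_trans _] := mu_cong.
have /eqP[] := card3_rclass_neq mu_refl mu_sym mu_trans T3 mupq (introN eqP npq) nmuxy.
have card_le := card_rclass_le d_malcev mu_refl b_refl Cb.
by apply/anti_leq; rewrite !card_le // b_sym.
Qed.
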